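(* For every index coding instance $\mathcal{I}=\{(i\mid A_i):i\in[m]\}$, the optimal value $\beta_{\text{FPCC}}(\mathcal{I})$ is attained by a family $(M_j,\gamma_j)_{j\in[n]}$ in which every $M_j$ is a minimal partial clique set; equivalently, restricting the FPCC optimization to families of minimal partial clique sets does not change its value.
   Context: $\beta_{\text{MDS}}(M)=|M|-\min_{i\in M}|M\cap A_i|$ for nonempty $M\subseteq[m]$. $\beta_{\text{FPCC}}(\mathcal{I})=\min\sum_{j\in[n]}\gamma_j\beta_{\text{MDS}}(M_j)$ over finite families of nonempty (possibly overlapping) subsets $M_1,\dots,M_n\subseteq[m]$ and weights $\gamma_j\in[0,1]$ with $\sum_{j:\,i\in M_j}\gamma_j\ge1$ for every $i\in[m]$. A nonempty set $M\subseteq[m]$ is a minimal partial clique set if for every partition of $M$ into nonempty disjoint subsets $M_1,\dots,M_n$ one has $\beta_{\text{MDS}}(M)\le\sum_{j}\beta_{\text{MDS}}(M_j)$. *)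

From mathcomp Require Import all_boot all_order all_algebra.
Set Implicit Arguments. Unset Strict Implicit. Unset Printing Implicit Defensive.
Import Order.TTheory GRing.Theory Num.Theory.

(* An index coding instance with m users: user i : 'I_m has side information
   A i : {set 'I_m} (with i \notin A i, imposed in the theorem). *)

(* beta_MDS(M) = |M| - min_{i in M} |M ∩ A_i|   (min computed with default |M|,
   which is an upper bound of every term, so it is the true min for M nonempty) *)
Definition beta_mds (m : nat) (A : 'I_m -> {set 'I_m}) (M : {set 'I_m}) : nat :=
  #|M| - \big[minn/#|M|]_(i in M) #|M :&: A i|.

Definition minimal_partial_clique (m : nat) (A : 'I_m -> {set 'I_m})
  (M : {set 'I_m}) : Prop :=
  M != set0 /\
  forall P : {set {set 'I_m}}, partition P M ->
    (beta_mds A M <= \sum_(B in P) beta_mds A B)%N.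

Definition fpcc_feasible (R : realFieldType) (m : nat) (n : nat)
  (M : 'I_n -> {set 'I_m}) (gamma : 'I_n -> R) : Prop :=
  (forall j, M j != set0) /\
  (forall j, (0 <= gamma j <= 1)%R) /\
  (forall i : 'I_m, (1 <= \sum_(j < n | i \in M j) gamma j)%R).

Definition fpcc_cost (R : realFieldType) (m : nat) (A : 'I_m -> {set 'I_m})
  (n : nat) (M : 'I_n -> {set 'I_m}) (gamma : 'I_n -> R) : R :=
  (\sum_(j < n) gamma j * (beta_mds A (M j))%:R)%R.

From mathcomp Require Import all_boot all_order all_algebra.
From mathcomp Require Import ring lra.
Set Implicit Arguments. Unset Strict Implicit. Unset Printing Implicit Defensive.
Import Order.TTheory GRing.Theory Num.Theory.

(* Cut every set of a feasible family into the blocks of a cheapest partition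
   of it, giving each block the weight of the set.  Every block of a cheapest
   partition is a minimal partial clique set (otherwise it could be split
   further at lower cost), and the cost of the partition is at most
   beta_MDS of the set, so coverage is kept and the cost does not increase;
   capping the accumulated weight of each block at 1 keeps coverage as well.
   So the FPCC problem has the same infimum when restricted to the finitely
   many minimal partial clique sets.  There it is a linear program, feasible
   (take singletons) and bounded below by 0, and over any ordered field such
   a program attains its minimum, as Fourier-Motzkin elimination shows. *)

Lemma big_cond_indicator (R : pzSemiRingType) (I : finType) (P : pred I) (F : I -> R) :
  (\sum_(i | P i) F i = \sum_i (P i)%:R * F i)%R.
Proof. by rewrite big_mkcond; apply: eq_bigr => i _; rewrite mulr_natl mulrb. Qed.

Lemma sum_min1_ge1 (R : realDomainType) (I : finType) (P : pred I) (y : I -> R) :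
  (forall i, 0 <= y i)%R -> (1 <= \sum_(i | P i) y i)%R ->
  (1 <= \sum_(i | P i) Num.min (y i) 1)%R.
Proof.
move=> y_ge0 sum_ge1.
have [i /andP[Pi yi_ge1]|y_lt1] := pickP (fun i => P i && (1 <= y i)%R).
  rewrite (bigD1 i) //= (min_r yi_ge1) lerDl; apply: sumr_ge0 => j _.
  by rewrite le_min y_ge0 ler01.
rewrite (eq_bigr y) // => i Pi; apply: min_l; apply: ltW; rewrite ltNge.
by apply/negP => yi_ge1; have := y_lt1 i; rewrite Pi yi_ge1.
Qed.

Lemma leq_sum_setU (T : finType) (X Y : {set T}) (F : T -> nat) :
  \sum_(i in X :|: Y) F i <= \sum_(i in X) F i + \sum_(i in Y) F i.
Proof.
rewrite (big_setID X) setUK setDUl setDv set0U leq_add2l.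
by rewrite [leqRHS](big_setID X) leq_addl.
Qed.

Section Partitions.
Variable T : finType.
Implicit Types (D B : {set T}) (P Q : {set {set T}}).

Lemma partition_set1 D : D != set0 -> partition [set D] D.
Proof. by move=> D0; rewrite /partition cover1 eqxx trivIset1 inE eq_sym D0. Qed.

Lemma partitionU P Q D B : partition P D -> partition Q B -> [disjoint D & B] ->
  partition (P :|: Q) (D :|: B).
Proof.
case/and3P=> /eqP coverP trivP P0 /and3P[/eqP coverQ trivQ Q0] DB.
rewrite /partition /cover bigcup_setU -/(cover P) -/(cover Q) coverP coverQ eqxx.
by rewrite trivIsetU ?coverP ?coverQ // inE negb_or P0 Q0.
Qed.

Lemma partition_refine P Q D B : partition P D -> B \in P -> partition Q B ->
  partition ((P :\ B) :|: Q) D.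
Proof.
move=> PD BP QB; have BD := partitionS PD BP.
rewrite -(setID D B) (setIidPr BD) [B :|: _]setUC.
apply: partitionU (partitionD1 PD BP) QB _.
by rewrite disjoints_subset setDE subsetIr.
Qed.

End Partitions.

Section FourierMotzkin.
Variable R : realFieldType.
Local Open Scope ring_scope.

Definition constraint := (seq R * R)%type.

Definition lin k (a : seq R) (x : nat -> R) := \sum_(i < k) a`_i * x i.

Definition sat k (S : seq constraint) (x : nat -> R) :=
  forall c, c \in S -> c.2 <= lin k c.1 x.

Lemma eq_lin k a x y : (forall i, (i < k)%N -> x i = y i) -> lin k a x = lin k a y.
Proof. by move=> exy; apply: eq_bigr => i _; rewrite exy. Qed.

Lemma eq_sat k S x y : (forall i, (i < k)%N -> x i = y i) -> sat k S x -> sat k S y.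
Proof. by move=> exy xS c /xS; rewrite (eq_lin _ exy). Qed.

Definition upd (x : nat -> R) k z i := if i == k then z else x i.

Lemma lin_upd k a x z : lin k.+1 a (upd x k z) = lin k a x + a`_k * z.
Proof.
rewrite /lin big_ord_recr /= /upd eqxx; congr (_ + _).
by apply: eq_bigr => i _; rewrite ltn_eqF.
Qed.

Definition fm_comb k (p n : constraint) : constraint :=
  (mkseq (fun i => p.1`_i * - n.1`_k + n.1`_i * p.1`_k) k,
   p.2 * - n.1`_k + n.2 * p.1`_k).

Lemma lin_fm_comb k p n x :
  lin k (fm_comb k p n).1 x = lin k p.1 x * - n.1`_k + lin k n.1 x * p.1`_k.
Proof.
rewrite /lin /= !mulr_suml -big_split /=; apply: eq_bigr => i _.
by rewrite nth_mkseq //; ring.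
Qed.

Definition fm_elim k (S : seq constraint) :=
  [seq c <- S | c.1`_k == 0] ++
  [seq fm_comb k p n | p <- [seq c <- S | 0 < c.1`_k], n <- [seq c <- S | c.1`_k < 0]].

Lemma fm_elim_sound k S y z : sat k.+1 S (upd y k z) -> sat k (fm_elim k S) y.
Proof.
move=> yzS c; rewrite mem_cat => /orP[|].
  by rewrite mem_filter => /andP[/eqP ck0 /yzS]; rewrite lin_upd ck0 mul0r addr0.
case/allpairsP => -[p n] /= [+ + ->]; rewrite !mem_filter lin_fm_comb /=.
move=> /andP[pk_gt0 /yzS] + /andP[nk_lt0 /yzS]; rewrite !lin_upd => hp hn.
nra.
Qed.

(* For [c.1`_k != 0], constraint [c] on [upd y k z] is [z >= fm_bound c] or
   [z <= fm_bound c] according to the sign of [c.1`_k]. *)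
Definition fm_bound k y (c : constraint) := (c.2 - lin k c.1 y) / c.1`_k.

Lemma fm_bound_le k S y p n : sat k (fm_elim k S) y -> p \in S -> n \in S ->
  0 < p.1`_k -> n.1`_k < 0 -> fm_bound k y p <= fm_bound k y n.
Proof.
move=> yS pS nS pk_gt0 nk_lt0.
have : fm_comb k p n \in fm_elim k S.
  by rewrite mem_cat allpairs_f ?orbT // mem_filter ?pk_gt0 ?nk_lt0.
move/yS; rewrite lin_fm_comb /= => hpn.
rewrite /fm_bound ler_pdivrMr // mulrAC ler_ndivlMr //.
nra.
Qed.

Lemma fm_elim_complete k S y : sat k (fm_elim k S) y -> exists z, sat k.+1 S (upd y k z).
Proof.
move=> yS; pose L := fm_bound k y.
(* The largest lower bound on [z]; if there is none, the smallest upper bound. *)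
pose z := \big[Num.max/ \big[Num.min/0]_(n <- S | n.1`_k < 0) L n]_(p <- S | 0 < p.1`_k) L p.
exists z => c cS; rewrite lin_upd.
case: (ltrgtP c.1`_k 0) => ck.
- have : z <= L c.
    rewrite /z big_seq_cond; apply: bigmax_le => [|p /andP[pS pk]].
      exact: ge_bigmin_seq.
    exact: (fm_bound_le yS).
  by rewrite /L ler_ndivlMr // => h; lra.
- have : L c <= z by apply: le_bigmax_seq.
  by rewrite /L ler_pdivrMr // => h; lra.
- have : c \in fm_elim k S by rewrite mem_cat mem_filter ck eqxx cS.
  by move/yS; rewrite ck mul0r addr0.
Qed.

Fixpoint fm_project n S :=
  if n is n'.+1 then fm_project n' (fm_elim n'.+1 S) else S.

Lemma fm_projectP n S y :
  sat 1 (fm_project n S) y <-> exists x, sat n.+1 S x /\ x 0%N = y 0%N.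
Proof.
elim: n S y => [|n IH] S y /=.
  split=> [yS|[x [xS x0]]]; first by exists y.
  by apply: eq_sat xS => -[].
rewrite IH; split=> [[x [/fm_elim_complete[z xzS] x0]]|[x [xS x0]]].
  by exists (upd x n.+1 z).
exists x; split=> //; apply: (@fm_elim_sound _ _ _ (x n.+1)).
by apply: eq_sat xS => i _; rewrite /upd; case: eqP => // ->.
Qed.

Lemma lin1 a x : lin 1 a x = a`_0 * x 0%N.
Proof. by rewrite /lin big_ord1. Qed.

Lemma sat1_min S t0 b : sat 1 S (fun=> t0) ->
  (forall t, sat 1 S (fun=> t) -> b <= t) ->
  exists2 t, sat 1 S (fun=> t) & forall t', sat 1 S (fun=> t') -> t <= t'.
Proof.
(* The default [b] keeps [t] below all solutions even when no constraint
   bounds them from below. *)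
move=> t0S bS; pose t := \big[Num.max/b]_(c <- S | 0 < c.1`_0) (c.2 / c.1`_0).
have t_min t' : sat 1 S (fun=> t') -> t <= t'.
  move=> t'S; rewrite /t big_seq_cond; apply: bigmax_le => [|c /andP[cS ck]].
    exact: bS.
  by rewrite ler_pdivrMr // mulrC -lin1 t'S.
exists t => // c cS; rewrite lin1.
case: (ltrgtP c.1`_0 0) => ck.
- by have := t0S c cS; have := t_min _ t0S; rewrite lin1; nra.
- rewrite mulrC -ler_pdivrMr //.
  exact: (le_bigmax_seq _ _ _ (fun c : constraint => c.2 / c.1`_0) cS ck).
- by have := t0S c cS; rewrite lin1 ck !mul0r.
Qed.

Definition shift0 (x : nat -> R) t i := if i is j.+1 then x j else t.

Lemma lin_shift0 k a0 a x t : lin k.+1 (a0 :: a) (shift0 x t) = a0 * t + lin k a x.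
Proof. by rewrite /lin big_ord_recl. Qed.

Lemma lin_opp k a x : lin k (map -%R a) x = - lin k a x.
Proof.
rewrite /lin -sumrN; apply: eq_bigr => i _; rewrite -mulNr; congr (_ * _).
have [ia|ai] := ltnP i (size a); first by rewrite (nth_map 0).
by rewrite !nth_default ?size_map ?oppr0.
Qed.

Definition objective_system (S : seq constraint) (f : seq R) : seq constraint :=
  (1 :: map -%R f, 0) :: (-1 :: f, 0) :: [seq (0 :: c.1, c.2) | c <- S].

Lemma sat_objective_system k S f x t :
  sat k.+1 (objective_system S f) (shift0 x t) <-> sat k S x /\ t = lin k f x.
Proof.
split=> [xtS|[xS ->] c].
  split=> [c cS|].
    have := xtS (0 :: c.1, c.2); rewrite lin_shift0 mul0r add0r; apply.
    by rewrite !in_cons map_f ?orbT.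
  have := xtS _ (mem_head _ _); have := xtS (-1 :: f, 0).
  by rewrite !lin_shift0 lin_opp !in_cons eqxx orbT => /(_ isT) /= ? ?; lra.
rewrite !in_cons => /orP[/eqP->|/orP[/eqP->|/mapP[c' c'S ->]]];
  rewrite lin_shift0 ?lin_opp /=; try lra.
by rewrite mul0r add0r; apply: xS.
Qed.

Theorem lp_min k S f x0 b : sat k S x0 -> (forall x, sat k S x -> b <= lin k f x) ->
  exists2 x, sat k S x & forall y, sat k S y -> lin k f x <= lin k f y.
Proof.
move=> x0S bS; pose T := fm_project k (objective_system S f).
have TP t : sat 1 T (fun=> t) <-> exists2 x, sat k S x & t = lin k f x.
  rewrite fm_projectP; split=> [[x' [x'S <-]]|[x xS ->]].
    have /sat_objective_system[] :
        sat k.+1 (objective_system S f) (shift0 (x' \o succn) (x' 0%N)).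
      by apply: eq_sat x'S => -[].
    by exists (x' \o succn).
  by exists (shift0 x (lin k f x)); split=> //; apply/sat_objective_system.
have [|t|t tT t_min] := @sat1_min T (lin k f x0) b.
- by apply/TP; exists x0.
- by case/TP=> x xS ->; apply: bS.
case/TP: tT => x xS tE; exists x => // y yS; rewrite -tE; apply: t_min.
by apply/TP; exists y.
Qed.

End FourierMotzkin.

Section CheapestPartition.
Variables (m : nat) (A : 'I_m -> {set 'I_m}).
Local Notation beta := (beta_mds A).

Definition minimal_partial_cliqueb M := (M != set0) &&
  [forall P : {set {set 'I_m}}, partition P M ==> (beta M <= \sum_(B in P) beta B)].

Lemma minimal_partial_cliqueP M :
  reflect (minimal_partial_clique A M) (minimal_partial_cliqueb M).
Proof.
apply: (iffP andP) => -[M0 Mmin]; split=> //.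
  by move=> P; apply/implyP; apply: (forallP Mmin).
by apply/forallP => P; apply/implyP/Mmin.
Qed.

(* The default [set M] is a partition of [M] only if [M != set0]; for
   [M = set0] the value is junk. *)
Definition cheapest_partition M :=
  arg_min [set M] (partition^~ M) (fun P => \sum_(B in P) beta B).

Lemma cheapest_partitionP M : M != set0 ->
  [/\ partition (cheapest_partition M) M,
      {in cheapest_partition M, forall B, minimal_partial_cliqueb B} &
      \sum_(B in cheapest_partition M) beta B <= beta M].
Proof.
move=> M0; rewrite /cheapest_partition.
case: arg_minnP => [|P PM Pmin]; first exact: partition_set1.
split=> // [B BP|]; last by have := Pmin _ (partition_set1 M0); rewrite big_set1.
apply/andP; split; first exact: partition_neq0 PM BP.
apply/forallP => Q; apply/implyP => QB; rewrite leqNgt; apply/negP => Qlt.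
have : \sum_(C in P) beta C < \sum_(C in P) beta C.
  apply: leq_ltn_trans (Pmin _ (partition_refine PM BP QB)) _.
  apply: leq_ltn_trans (leq_sum_setU _ _ _) _.
  by rewrite [ltnRHS](big_setD1 B BP) [ltnRHS]addnC ltn_add2l.
by rewrite ltnn.
Qed.

End CheapestPartition.

Section FixedFamily.
Variables (R : realFieldType) (m : nat) (A : 'I_m -> {set 'I_m}).
Variables (n : nat) (M : 'I_n -> {set 'I_m}).
Local Open Scope ring_scope.
Implicit Types (x : nat -> R) (gamma : 'I_n -> R).

Definition coefs (f : 'I_n -> R) : seq R := [seq f j | j <- enum 'I_n].

Lemma lin_coefs f x : lin n (coefs f) x = \sum_(j < n) f j * x j.
Proof.
by apply: eq_bigr => j _; rewrite (nth_map j) ?size_enum_ord // nth_ord_enum.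
Qed.

Definition coef_at j (c : R) := coefs (fun i => if i == j then c else 0).

Lemma lin_coef_at j c x : lin n (coef_at j c) x = c * x j.
Proof.
rewrite lin_coefs (bigD1 j) //= eqxx big1 ?addr0 // => i /negbTE->.
by rewrite mul0r.
Qed.

Definition fpcc_system : seq (constraint R) :=
  [seq (coef_at j 1, 0) | j <- enum 'I_n] ++
  [seq (coef_at j (-1), -1) | j <- enum 'I_n] ++
  [seq (coefs (fun j => (u \in M j)%:R), 1) | u <- enum 'I_m].

Definition fpcc_objective := coefs (fun j => (beta_mds A (M j))%:R).

Lemma fpcc_cost_lin x : fpcc_cost A M (fun j => x j) = lin n fpcc_objective x.
Proof. by rewrite lin_coefs; apply: eq_bigr => j _; rewrite mulrC. Qed.

Lemma fpcc_system_feasible x : (forall j, M j != set0) ->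
  sat n fpcc_system x -> fpcc_feasible M (fun j => x j).
Proof.
move=> M0 xS; split=> //; split=> [j|u].
  have jn : j \in enum 'I_n by rewrite mem_enum.
  have := xS (coef_at j 1, 0); have := xS (coef_at j (-1), -1).
  rewrite !mem_cat !(map_f _ jn) ?orbT //= !lin_coef_at mul1r mulN1r lerN2.
  by move=> /(_ isT) x_le1 /(_ isT) x_ge0; rewrite x_ge0.
have := xS (coefs (fun j => (u \in M j)%:R), 1).
have un : u \in enum 'I_m by rewrite mem_enum.
rewrite !mem_cat (map_f _ un) ?orbT //= lin_coefs.
by rewrite (big_cond_indicator (fun j => u \in M j)) => /(_ isT).
Qed.

Definition ord_ext gamma (i : nat) : R := if insub i is Some j then gamma j else 0.

Lemma ord_extE gamma (j : 'I_n) : ord_ext gamma j = gamma j.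
Proof. by rewrite /ord_ext valK. Qed.

Lemma fpcc_cost_ord_ext gamma : fpcc_cost A M gamma = lin n fpcc_objective (ord_ext gamma).
Proof. by rewrite -fpcc_cost_lin; apply: eq_bigr => j _; rewrite ord_extE. Qed.

Lemma fpcc_feasible_sat gamma : fpcc_feasible M gamma -> sat n fpcc_system (ord_ext gamma).
Proof.
case=> _ [gamma01 gamma_cover] c; rewrite !mem_cat.
case/or3P=> /mapP[i _ ->] /=; rewrite ?lin_coef_at ?ord_extE.
- by rewrite mul1r; case/andP: (gamma01 i).
- by rewrite mulN1r lerN2; case/andP: (gamma01 i).
rewrite lin_coefs (le_trans (gamma_cover i)) // big_cond_indicator.
by under [X in _ <= X]eq_bigr do rewrite ord_extE.
Qed.

Lemma fpcc_fixed_family_min gamma0 : fpcc_feasible M gamma0 ->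
  exists2 gamma, fpcc_feasible M gamma &
    forall gamma', fpcc_feasible M gamma' -> fpcc_cost A M gamma <= fpcc_cost A M gamma'.
Proof.
move=> gamma0_feas; have M0 : forall j, M j != set0 by case: gamma0_feas.
have [|x xS x_min] := lp_min (f := fpcc_objective) (b := 0) (fpcc_feasible_sat gamma0_feas).
  move=> y /(fpcc_system_feasible M0) [_ [y01 _]]; rewrite -fpcc_cost_lin.
  by apply: sumr_ge0 => j _; case/andP: (y01 j) => y_ge0 _; rewrite mulr_ge0.
exists (fun j => x j); first exact: fpcc_system_feasible.
by move=> gamma' /fpcc_feasible_sat/x_min; rewrite fpcc_cost_lin fpcc_cost_ord_ext.
Qed.

End FixedFamily.

Section Refinement.
Variables (R : realFieldType) (m : nat) (A : 'I_m -> {set 'I_m}).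
Local Notation beta := (beta_mds A).
Local Open Scope ring_scope.

Definition clique_sets := [set B | minimal_partial_cliqueb A B].

Definition clique_family (j : 'I_#|clique_sets|) : {set 'I_m} := enum_val j.

Variables (n : nat) (M : 'I_n -> {set 'I_m}) (gamma : 'I_n -> R).
Hypothesis gamma_feas : fpcc_feasible M gamma.

Definition block_weight B := \sum_(j < n | B \in cheapest_partition A (M j)) gamma j.

Lemma block_weight_ge0 B : 0 <= block_weight B.
Proof.
have [_ [gamma01 _]] := gamma_feas.
by apply: sumr_ge0 => j _; case/andP: (gamma01 j).
Qed.

Lemma block_weight_cover u : 1 <= \sum_(B in clique_sets | u \in B) block_weight B.
Proof.
have [M0 [gamma01 gamma_cover]] := gamma_feas.
apply: le_trans (gamma_cover u) _; rewrite (exchange_big_dep predT) //= big_mkcond.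
apply: ler_sum => j _; have gamma_ge0 : 0 <= gamma j by case/andP: (gamma01 j).
case: ifP => uM; last by apply: sumr_ge0.
have [PM P_min _] := cheapest_partitionP A (M0 j).
set P := cheapest_partition A (M j) in PM P_min *.
have uP : u \in cover P by rewrite (cover_partition PM).
have uB : u \in pblock P u by rewrite mem_pblock.
have BP : pblock P u \in P by apply: pblock_mem.
rewrite (bigD1 (pblock P u)) /=; last by rewrite inE P_min // uB BP.
by rewrite lerDl; apply: sumr_ge0.
Qed.

Lemma block_weight_cost :
  \sum_(B in clique_sets) block_weight B * (beta B)%:R <= fpcc_cost A M gamma.
Proof.
have [M0 [gamma01 _]] := gamma_feas.
under eq_bigr do rewrite mulr_suml.
rewrite (exchange_big_dep predT) //=; apply: ler_sum => j _.
have [_ P_min P_cost] := cheapest_partitionP A (M0 j).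
rewrite -mulr_sumr ler_wpM2l //; first by case/andP: (gamma01 j).
rewrite (eq_bigl (mem (cheapest_partition A (M j)))) => [|B].
  by rewrite -natr_sum ler_nat.
by apply: andb_idl => /P_min; rewrite inE.
Qed.

Lemma fpcc_refine : exists2 gamma' : 'I_#|clique_sets| -> R,
  fpcc_feasible clique_family gamma' &
  fpcc_cost A clique_family gamma' <= fpcc_cost A M gamma.
Proof.
exists (fun j => Num.min (block_weight (clique_family j)) 1).
  split; [|split].
  - by move=> j; have := enum_valP j; rewrite inE => /andP[].
  - by move=> j; rewrite le_min block_weight_ge0 ler01 ge_min lexx orbT.
  move=> u; have := sum_min1_ge1 block_weight_ge0 (block_weight_cover u).
  by rewrite big_enum_val_cond.
apply: le_trans block_weight_cost; rewrite [leRHS]big_enum_val.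
by apply: ler_sum => j _; rewrite ler_wpM2r // ge_min lexx.
Qed.

End Refinement.

Arguments clique_family {m} A j.

Theorem proposition16 (R : realFieldType) (m : nat) (A : 'I_m -> {set 'I_m})
  (hA : forall i : 'I_m, i \notin A i) :
  exists (n : nat) (M : 'I_n -> {set 'I_m}) (gamma : 'I_n -> R),
    [/\ fpcc_feasible M gamma,
        (forall j, minimal_partial_clique A (M j)) &
        forall (n' : nat) (M' : 'I_n' -> {set 'I_m}) (gamma' : 'I_n' -> R),
          fpcc_feasible M' gamma' ->
          (fpcc_cost A M gamma <= fpcc_cost A M' gamma')%R].
Proof.
have singletons : fpcc_feasible (fun i : 'I_m => [set i]) (fun=> 1%R : R).
  split; [by move=> i; apply/set0Pn; exists i; rewrite inE | split=> [_|i]].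
    by rewrite ler01 lexx.
  by rewrite (big_pred1 i) // => j; rewrite inE eq_sym.
have [gamma0 gamma0_feas _] := fpcc_refine A singletons.
have [gamma gamma_feas gamma_min] := fpcc_fixed_family_min A gamma0_feas.
exists #|clique_sets A|, (clique_family A), gamma; split=> // [j|n' M' gamma'].
  by apply/minimal_partial_cliqueP; have := enum_valP j; rewrite inE.
by case/(fpcc_refine A) => gamma'' /gamma_min /le_trans; apply.
Qed.
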